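(* Let $k\ge2$ and let $\mathcal{H}\subset\mathbb{CP}^3$ be an essential arrangement of $2k$ planes such that every plane in $\mathcal{H}$ meets the other planes of $\mathcal{H}$ along exactly $k+1$ distinct lines. Then $\mathcal{H}$ is a Hirzebruch arrangement.
   Context: An arrangement is a finite set of distinct hyperplanes; it is essential if the common intersection of its members is empty. $\mathcal{L}$ is the set of non-empty proper intersections of members and $m_L$ the number of members containing $L$. An essential arrangement $\mathcal{H}\subset\mathbb{CP}^n$ is Hirzebruch if (H1) $m_L/\operatorname{codim}L\le|\mathcal{H}|/(n+1)$ for all $L\in\mathcal{L}$, and (H2) every $H\in\mathcal{H}$ meets the members of $\mathcal{H}\setminus\{H\}$ along exactly $\big(1-\frac{2}{n+1}\big)|\mathcal{H}|+1$ distinct codimension-2 subspaces. *)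

From HB Require Import structures.
From mathcomp Require Import all_boot all_order all_algebra.
From mathcomp Require Import complex.
From mathcomp Require Import reals.
Set Implicit Arguments. Unset Strict Implicit. Unset Printing Implicit Defensive.
Import Order.TTheory GRing.Theory Num.Theory.
Local Open Scope ring_scope.

(* Projective space P^n over a field F is modelled as P(F^(n+1)): a projective
   subspace is a linear subspace of row vectors 'rV[F]_(n.+1), represented by a
   square matrix 'M[F]_(n.+1) through its row space (mxalgebra).
   The projective subspace is empty iff the row space is 0; its projective
   codimension is (n+1) - rank.  A hyperplane of P^n is a subspace of rank n. *)

Section Arr.
Variables (F : fieldType) (n m : nat).
Implicit Types (A : 'I_m -> 'M[F]_n.+1) (L : 'M[F]_n.+1).

Definition is_arrangement A : Prop :=
  (forall i, \rank (A i) = n) /\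
  (forall i j, i != j -> ~~ (A i == A j)%MS).

Definition meet_of A (S : {set 'I_m}) : 'M[F]_n.+1 := (\bigcap_(i in S) A i)%MS.

Definition essential A : Prop := \rank (meet_of A setT) = 0%N.

Definition pcodim L : nat := (n.+1 - \rank L)%N.

Definition in_poset A L : Prop :=
  exists S : {set 'I_m}, S != set0 /\ (L == meet_of A S)%MS
    /\ (0 < \rank L)%N /\ (\rank L < n.+1)%N.

Definition mult A L : nat := #|[set i | (L <= A i)%MS]|.

(* the distinct codimension-2 subspaces along which A i meets the other
   members (subspaces compared through the canonical representative <<_>>) *)
Definition meet_lines A (i : 'I_m) : seq 'M[F]_n.+1 :=
  undup [seq <<(A i :&: A j)%MS>>%MS | j <- enum 'I_m &
          (j != i) && (\rank (A i :&: A j)%MS == n.+1 - 2)%N].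

Definition Hirzebruch A : Prop :=
  is_arrangement A /\ essential A /\
  (forall L, in_poset A L ->
     ((mult A L)%:R / (pcodim L)%:R : rat) <= m%:R / n.+1%:R) /\
  (forall i, ((size (meet_lines A i))%:R : rat)
              = (1 - 2%:R / n.+1%:R) * m%:R + 1).

End Arr.

From HB Require Import structures.
From mathcomp Require Import all_boot all_order all_algebra.
From mathcomp Require Import complex.
From mathcomp Require Import reals.
From mathcomp Require Import zify ring.
Import Order.TTheory GRing.Theory Num.Theory.
Local Open Scope ring_scope.

(* Two distinct planes of P^3 meet in a line, so the k+1 lines cut out on a
   plane H bound how many planes can share a line of H (those planes all give
   the same line) or pass through a point off H (those planes give pairwise
   distinct lines).  Hence a line lies on at most k planes, a point on at most
   k+1 <= 3k/2 planes, and a plane on one; these are exactly (H1) for 2k planes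
   in P^3, while (H2) is the hypothesis itself since (1 - 2/4) 2k + 1 = k + 1. *)

Section HyperplaneArrangement.
Set Implicit Arguments. Unset Strict Implicit.
Variables (F : fieldType) (n m : nat) (A : 'I_m -> 'M[F]_n.+1).
Hypothesis arrA : is_arrangement A.

Lemma eqmx_rank_geq (p q r : nat) (X : 'M[F]_(p, r)) (Y : 'M[F]_(q, r)) :
  (X <= Y)%MS -> (\rank Y <= \rank X)%N -> (X == Y)%MS.
Proof. by move=> sXY rYX; rewrite -(mxrank_leqif_eq sXY).2 eqn_leq mxrankS. Qed.

Lemma rank_cap_hyperplanes i j : i != j -> \rank (A i :&: A j)%MS = n.-1.
Proof.
move=> ij; have [rkA distA] := arrA.
have rk_sum := mxrank_sum_cap (A i) (A j); rewrite !rkA in rk_sum.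
have rk_sum_le : (\rank (A i + A j)%MS <= n.+1)%N by apply: rank_leq_col.
have rk_sum_ge : (n <= \rank (A i + A j)%MS)%N.
  by rewrite -{1}(rkA i) mxrankS // addsmxSl.
have rk_sum_neq : \rank (A i + A j)%MS != n.
  apply: contra (distA i j ij) => /eqP rk_n.
  have rk_sum_leq l : (\rank (A i + A j)%MS <= \rank (A l))%N by rewrite rk_n rkA.
  have /eqmxP Ei := eqmx_rank_geq (addsmxSl (A i) (A j)) (rk_sum_leq i).
  have /eqmxP Ej := eqmx_rank_geq (addsmxSr (A i) (A j)) (rk_sum_leq j).
  by apply/eqmxP; apply: eqmx_trans Ei (eqmx_sym Ej).
lia.
Qed.

Lemma mult_leq_hyperplane (L : 'M[F]_n.+1) :
  \rank L = n -> (mult A L <= 1)%N.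
Proof.
move=> rL; apply/card_le1_eqP => j1 j2; rewrite !inE => sL1 sL2.
apply: contraTeq (arrA.2 j2 j1) _.
have rA l : (\rank (A l) <= \rank L)%N by rewrite rL arrA.1.
have /eqmxP E1 := eqmx_rank_geq sL1 (rA j1).
have /eqmxP E2 := eqmx_rank_geq sL2 (rA j2).
by apply/eqmxP; apply: eqmx_trans (eqmx_sym E2) E1.
Qed.

Lemma essential_not_sub (L : 'M[F]_n.+1) :
  essential A -> (0 < \rank L)%N -> exists h, ~~ (L <= A h)%MS.
Proof.
move=> essA rL; apply/existsP; apply: contraTT rL => /existsPn subL.
have : (L <= meet_of A setT)%MS by apply/sub_bigcapmxP => i _; exact/negPn.
by move/mxrankS; rewrite essA leqn0 => /eqP ->.
Qed.

(* Planes through L meeting A h in the same codimension-2 subspace K would both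
   contain K + L, which is strictly bigger than K since L is not in A h. *)
Lemma mult_leq_size_meet_lines (L : 'M[F]_n.+1) h :
  ~~ (L <= A h)%MS -> (mult A L <= size (meet_lines A h))%N.
Proof.
move=> nLh; rewrite /mult cardE -(size_map (fun j => <<(A h :&: A j)%MS>>%MS)).
have neq_h j : (L <= A j)%MS -> j != h by apply: contraTneq => ->.
apply: uniq_leq_size.
  rewrite map_inj_in_uniq ?enum_uniq // => j1 j2.
  rewrite !mem_enum !inE => sL1 sL2 same_trace.
  apply: contraTeq isT => j12.
  have /andP[sK2 _] : ((A h :&: A j1) == (A h :&: A j2))%MS.
    apply/eqmxP; apply: eqmx_trans (eqmx_sym (genmxE _)) _.
    by rewrite same_trace; apply: genmxE.
  set K := (A h :&: A j1)%MS in sK2.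
  have sKj2 : (K <= A j2)%MS := submx_trans sK2 (capmxSr _ _).
  have rK : \rank K = n.-1 by rewrite rank_cap_hyperplanes // eq_sym neq_h.
  have rK_lt : (\rank K < \rank (K + L)%MS)%N.
    rewrite (ltn_leqif (mxrank_leqif_sup (addsmxSl K L))).
    apply: contra nLh => sKL_K.
    exact: submx_trans (submx_trans (addsmxSr K L) sKL_K) (capmxSl _ _).
  have : (\rank (K + L)%MS <= \rank (A j1 :&: A j2)%MS)%N.
    by apply: mxrankS; rewrite addsmx_sub !sub_capmx capmxSr sKj2 sL1 sL2.
  by rewrite rank_cap_hyperplanes //; lia.
move=> x /mapP [j]; rewrite mem_enum inE => sLj ->.
rewrite mem_undup; apply: map_f; rewrite mem_filter neq_h //= mem_enum andbT.
by rewrite rank_cap_hyperplanes 1?eq_sym ?neq_h //; apply/eqP; lia.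
Qed.

(* Every member containing the codimension-2 subspace L meets A h exactly in L. *)
Lemma size_meet_lines_add_mult (L : 'M[F]_n.+1) h :
  \rank L = n.-1 -> (L <= A h)%MS -> (size (meet_lines A h) + mult A L <= m.+1)%N.
Proof.
move=> rL sLh; set M := [set j | (L <= A j)%MS].
have size_le : (size (meet_lines A h) <= 1 + #|~: M|)%N.
  rewrite -(size_image (fun j => <<(A h :&: A j)%MS>>%MS)).
  apply: (@uniq_leq_size _ _ (<<L>>%MS :: _)); first exact: undup_uniq.
  move=> x; rewrite mem_undup => /mapP [j]; rewrite mem_filter.
  move=> /andP [/andP [jh _] _] ->; rewrite in_cons.
  have [sLj | nLj] := boolP (L <= A j)%MS; last by rewrite image_f ?orbT ?inE.
  apply/orP; left; apply/eqP; apply: eq_genmx; apply: eqmx_sym; apply/eqmxP.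
  by apply: eqmx_rank_geq; rewrite ?sub_capmx ?sLh ?sLj // rank_cap_hyperplanes 1?eq_sym ?rL.
have := cardsC M; rewrite card_ord /mult -/M; lia.
Qed.

End HyperplaneArrangement.

Lemma ler_ratio_nat (R : numFieldType) (a b c d : nat) :
  (0 < b)%N -> (0 < d)%N -> (a * d <= c * b)%N ->
  (a%:R / b%:R : R) <= c%:R / d%:R.
Proof.
move=> b_gt0 d_gt0 le_ad_cb.
by rewrite ler_pdivrMr ?ltr0n // mulrAC ler_pdivlMr ?ltr0n // -!natrM ler_nat.
Qed.

Theorem lemma6p12 (R : realType) (k : nat) (A : 'I_(2 * k) -> 'M[R[i]]_4) :
  (2 <= k)%N ->
  is_arrangement A ->
  essential A ->
  (forall j, size (meet_lines A j) = k.+1) ->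
  Hirzebruch A.
Proof.
move=> k_ge2 arrA essA size_lines; do 2!split=> //.
split=> [L [? [_ [_ [rL_gt0 rL_lt4]]]] | i]; last first.
  by rewrite size_lines -addn1 natrD natrM; field.
apply: ler_ratio_nat; rewrite /pcodim; [lia | by [] |].
have [h nLh] := essential_not_sub essA rL_gt0.
have mult_le := mult_leq_size_meet_lines arrA nLh; rewrite size_lines in mult_le.
have [rL1 | [rL2 | rL3]] : (\rank L = 1 \/ \rank L = 2 \/ \rank L = 3)%N by lia.
- by rewrite rL1; lia.
- have [M0 | [j]] := set_0Vmem [set j | (L <= A j)%MS].
    by rewrite /mult M0 cards0.
  rewrite inE => sLj; have := size_meet_lines_add_mult arrA rL2 sLj.
  by rewrite size_lines rL2; lia.
- by have := mult_leq_hyperplane arrA rL3; rewrite rL3; lia.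
Qed.
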